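(* Let $\mathcal S=(S_1,\dots,S_s)\in B(H)^s$ be an $s$-tuple of selfadjoint operators, let $(\lambda_k)_{k=1}^\infty\subset\operatorname{Int}_{\mathbb R^s}W_{\rm e}(\mathcal S)$ with $(\lambda_k)_{k=1}^\infty\in\mathcal D(\mathcal S)$, and write $\lambda_k=(\lambda_{k,1},\dots,\lambda_{k,s})$. Let $\alpha_0,\dots,\alpha_s\in\mathbb R$ with $(\alpha_1,\dots,\alpha_s)\ne(0,\dots,0)$, let $V=\alpha_0I+\sum_{j=1}^s\alpha_jS_j$ and $a=\inf\{t:t\in W(V)\}$. Then $$\sum_{k=1}^\infty\Bigl(\alpha_0-a+\sum_{j=1}^s\alpha_j\lambda_{k,j}\Bigr)=\infty.$$
   Context: $H$ is an infinite-dimensional complex separable Hilbert space. $W(V)=\{\langle Vx,x\rangle:\|x\|=1\}$. $W_{\rm e}(\mathcal S)\subset\mathbb R^s$ is the set of $\lambda$ with $\langle S_jx_k,x_k\rangle\to\lambda_j$ for all $j$ for some orthonormal sequence $(x_k)$. $\mathcal D(\mathcal S)$ is the set of sequences $(\langle S_1u_k,u_k\rangle,\dots,\langle S_su_k,u_k\rangle)_{k\ge1}$ over orthonormal bases $(u_k)$ of $H$. $\operatorname{Int}_{\mathbb R^s}$ is interior in $\mathbb R^s$. *)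

From Stdlib Require Import Reals.
Open Scope R_scope.

Definition C : Type := (R * R)%type.
Definition Cre (z : C) : R := fst z.
Definition Cim (z : C) : R := snd z.
Definition RtoC (r : R) : C := (r, 0).
Definition C0 : C := (0, 0).
Definition C1 : C := (1, 0).
Definition Cadd (z w : C) : C := (fst z + fst w, snd z + snd w).
Definition Cmul (z w : C) : C :=
  (fst z * fst w - snd z * snd w, fst z * snd w + snd z * fst w).
Definition Cconj (z : C) : C := (fst z, - snd z).

Record CHilbert := mkCHilbert {
  hs :> Type;
  hzero : hs;
  hadd : hs -> hs -> hs;
  hopp : hs -> hs;
  hscal : C -> hs -> hs;
  hinner : hs -> hs -> C;
  hadd_assoc : forall x y z, hadd x (hadd y z) = hadd (hadd x y) z;
  hadd_comm : forall x y, hadd x y = hadd y x;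
  hadd_zero : forall x, hadd x hzero = x;
  hadd_opp : forall x, hadd x (hopp x) = hzero;
  hscal_one : forall x, hscal C1 x = x;
  hscal_assoc : forall a b x, hscal a (hscal b x) = hscal (Cmul a b) x;
  hscal_addv : forall a x y, hscal a (hadd x y) = hadd (hscal a x) (hscal a y);
  hscal_adds : forall a b x, hscal (Cadd a b) x = hadd (hscal a x) (hscal b x);
  hinner_add_l : forall x y z, hinner (hadd x y) z = Cadd (hinner x z) (hinner y z);
  hinner_scal_l : forall a x y, hinner (hscal a x) y = Cmul a (hinner x y);
  hinner_conj : forall x y, hinner y x = Cconj (hinner x y);
  hinner_pos : forall x, 0 <= fst (hinner x x);
  hinner_def : forall x, hinner x x = C0 -> x = hzero;
  hcomplete : forall u : nat -> hs,
    (forall eps, eps > 0 -> exists N, forall m n, (m >= N)%nat -> (n >= N)%nat ->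
        sqrt (fst (hinner (hadd (u m) (hopp (u n))) (hadd (u m) (hopp (u n))))) < eps) ->
    exists l, forall eps, eps > 0 -> exists N, forall n, (n >= N)%nat ->
        sqrt (fst (hinner (hadd (u n) (hopp l)) (hadd (u n) (hopp l)))) < eps;
  hseparable : exists d : nat -> hs, forall x eps, eps > 0 -> exists n,
        sqrt (fst (hinner (hadd x (hopp (d n))) (hadd x (hopp (d n))))) < eps;
  hinfdim : exists e : nat -> hs, forall i j,
        hinner (e i) (e j) = if Nat.eqb i j then C1 else C0
}.

Arguments hzero {_}.
Arguments hadd {_}.
Arguments hopp {_}.
Arguments hscal {_}.
Arguments hinner {_}.

Section Ops.
Context {H : CHilbert}.

Definition hnorm (x : H) : R := sqrt (Cre (hinner x x)).

Definition is_bounded_op (T : H -> H) : Prop :=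
  (forall x y, T (hadd x y) = hadd (T x) (T y)) /\
  (forall a x, T (hscal a x) = hscal a (T x)) /\
  (exists M, forall x, hnorm (T x) <= M * hnorm x).

Definition is_selfadjoint (T : H -> H) : Prop :=
  is_bounded_op T /\ forall x y, hinner (T x) y = hinner x (T y).

(** Orthonormal sequences and orthonormal bases (indexed by nat; the
    paper's index k >= 1 corresponds to k-1 here). *)
Definition orthonormal_seq (x : nat -> H) : Prop :=
  forall i j, hinner (x i) (x j) = if Nat.eqb i j then C1 else C0.

Definition orthonormal_basis (u : nat -> H) : Prop :=
  orthonormal_seq u /\ forall y, (forall k, hinner y (u k) = C0) -> y = hzero.

Definition numrange (V : H -> H) (z : C) : Prop :=
  exists x, hnorm x = 1 /\ z = hinner (V x) x.

(** s-tuples are functions on nat of which only the indices j < s matter.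
    Joint essential numerical range W_e(S) in R^s. *)
Definition ess_numrange (s : nat) (S : nat -> H -> H) (lam : nat -> R) : Prop :=
  exists x : nat -> H, orthonormal_seq x /\
    forall j, (j < s)%nat ->
      Un_cv (fun k => Cre (hinner (S j (x k)) (x k))) (lam j) /\
      Un_cv (fun k => Cim (hinner (S j (x k)) (x k))) 0.

(** Interior in R^s (with the sup-norm, which induces the usual topology). *)
Definition interior_Rs (s : nat) (A : (nat -> R) -> Prop) (lam : nat -> R) : Prop :=
  exists eps, eps > 0 /\
    forall mu : nat -> R, (forall j, (j < s)%nat -> Rabs (mu j - lam j) < eps) -> A mu.

Definition diag_seqs (s : nat) (S : nat -> H -> H) (lam : nat -> nat -> R) : Prop :=
  exists u : nat -> H, orthonormal_basis u /\
    forall k j, (j < s)%nat -> RtoC (lam k j) = hinner (S j (u k)) (u k).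

Fixpoint hsum (n : nat) (f : nat -> H) : H :=
  match n with
  | O => hzero
  | Datatypes.S m => hadd (hsum m f) (f m)
  end.

Definition lincomb_op (s : nat) (alpha0 : R) (alpha : nat -> R) (S : nat -> H -> H)
  : H -> H :=
  fun x => hadd (hscal (RtoC alpha0) x) (hsum s (fun j => hscal (RtoC (alpha j)) (S j x))).

End Ops.

Definition is_glb (E : R -> Prop) (m : R) : Prop :=
  (forall t, E t -> m <= t) /\ (forall b, (forall t, E t -> b <= t) -> b <= m).

Fixpoint Rsum_lt (n : nat) (f : nat -> R) : R :=
  match n with
  | O => 0
  | Datatypes.S m => Rsum_lt m f + f m
  end.

(* Let T = V - a I.  As a is the infimum of the numerical range of V, the form
   Q(x) = Re <T x, x> is nonnegative, and its diagonal in the orthonormal basis (u_k)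
   carrying (lam_k) is exactly the k-th term alpha0 - a + sum_j alpha_j lam_(k,j).
   If these terms had a finite sum, Q would tend to 0 along every orthonormal sequence:
   split a unit vector x as p + r with p its component along u_0, ..., u_(N-1); then
   Q(p) <= K |p|^2 is small once x is almost orthogonal to u_0, ..., u_(N-1), while by
   Cauchy-Schwarz for Q, Q(r) is bounded by the tail of the diagonal from N on.  But
   lam_0 is interior to W_e(S), so moving it slightly in the direction of alpha gives a
   point mu of W_e(S) with alpha0 - a + sum_j alpha_j mu_j > 0, i.e. an orthonormal
   sequence along which Q tends to a positive limit. *)

From Pilot Require Import Defs.
From Stdlib Require Import Reals Lra Lia Classical.
Open Scope R_scope.

Lemma Rsum_ext n f g :
  (forall k, (k < n)%nat -> f k = g k) -> Rsum_lt n f = Rsum_lt n g.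
Proof. induction n as [|n IH]; simpl; intro E; [reflexivity|]. rewrite IH, E; auto. Qed.

Lemma Rsum_add n f g : Rsum_lt n (fun k => f k + g k) = Rsum_lt n f + Rsum_lt n g.
Proof. induction n as [|n IH]; simpl; [ring|]. rewrite IH; ring. Qed.

Lemma Rsum_scal n c f : Rsum_lt n (fun k => c * f k) = c * Rsum_lt n f.
Proof. induction n as [|n IH]; simpl; [ring|]. rewrite IH; ring. Qed.

Lemma Rsum_const0 n : Rsum_lt n (fun _ => 0) = 0.
Proof. induction n as [|n IH]; simpl; [|rewrite IH]; ring. Qed.

Lemma Rsum_le n f g :
  (forall k, (k < n)%nat -> f k <= g k) -> Rsum_lt n f <= Rsum_lt n g.
Proof.
  induction n as [|n IH]; simpl; intro E; [lra|].
  assert (Rsum_lt n f <= Rsum_lt n g) by (apply IH; intros; apply E; lia).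
  specialize (E n (Nat.lt_succ_diag_r n)). lra.
Qed.

Lemma Rsum_ge0 n f : (forall k, (k < n)%nat -> 0 <= f k) -> 0 <= Rsum_lt n f.
Proof. intro E. rewrite <- (Rsum_const0 n). now apply Rsum_le. Qed.

Lemma Rsum_growing f : (forall k, 0 <= f k) -> Un_growing (fun n => Rsum_lt n f).
Proof. intros P n; simpl. specialize (P n). lra. Qed.

Lemma Rsum_delta n l v f :
  (forall k, (k < n)%nat -> k <> l -> f k = 0) -> f l = v ->
  Rsum_lt n f = if Nat.ltb l n then v else 0.
Proof.
  induction n as [|n IH]; simpl; intros Z V; [reflexivity|].
  rewrite IH by auto.
  destruct (Nat.eq_dec l n) as [->|Hln].
  - rewrite Nat.ltb_irrefl, (proj2 (Nat.ltb_lt n (S n))) by lia. lra.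
  - rewrite (Z n) by lia.
    destruct (Nat.ltb l n) eqn:E1.
    + apply Nat.ltb_lt in E1. rewrite (proj2 (Nat.ltb_lt l (S n))) by lia. ring.
    + apply Nat.ltb_ge in E1. rewrite (proj2 (Nat.ltb_ge l (S n))) by lia. ring.
Qed.

Lemma Rsum_update s f g j0 d : (j0 < s)%nat ->
  (forall j, j <> j0 -> g j = f j) -> g j0 = f j0 + d ->
  Rsum_lt s g = Rsum_lt s f + d.
Proof.
  induction s as [|s IH]; intros Hj E1 E2; [lia|]. simpl.
  destruct (Nat.eq_dec j0 s) as [->|Hjs].
  - rewrite (Rsum_ext s g f) by (intros; apply E1; lia). lra.
  - rewrite IH by (auto; lia). rewrite E1 by auto. lra.
Qed.

Lemma Rsum_drop_head n m f : (n <= m)%nat ->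
  Rsum_lt m (fun k => if Nat.ltb k n then 0 else f k) = Rsum_lt m f - Rsum_lt n f.
Proof.
  intro Hnm. induction Hnm as [|m Hnm IH]; simpl.
  - rewrite (Rsum_ext n _ (fun _ => 0)), Rsum_const0; [ring|].
    intros k Hk. now rewrite (proj2 (Nat.ltb_lt k n)).
  - rewrite IH, (proj2 (Nat.ltb_ge m n) Hnm). ring.
Qed.

Lemma Un_cv_const c : Un_cv (fun _ => c) c.
Proof. intros e He. exists 0%nat. intros. unfold Rdist. rewrite Rminus_diag, Rabs_R0. lra. Qed.

Lemma Rsum_cv s (g : nat -> nat -> R) (l : nat -> R) :
  (forall j, (j < s)%nat -> Un_cv (fun n => g n j) (l j)) ->
  Un_cv (fun n => Rsum_lt s (g n)) (Rsum_lt s l).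
Proof.
  induction s as [|s IH]; intro A; simpl.
  - apply Un_cv_const.
  - apply CV_plus; [apply IH; intros j Hj|]; apply A; lia.
Qed.

Lemma quadratic_ge0_discr A B C : 0 <= A ->
  (forall t, 0 <= A * t * t + B * t + C) -> B * B <= 4 * A * C.
Proof.
  intros HA P.
  destruct (Req_dec A 0) as [->|A0].
  - destruct (Req_dec B 0) as [->|B0]; [lra|].
    specialize (P (- (C + 1) / B)).
    replace (0 * (- (C + 1) / B) * (- (C + 1) / B) + B * (- (C + 1) / B) + C)
      with (-1) in P by (field; auto). lra.
  - specialize (P (- B / (2 * A))).
    replace (A * (- B / (2 * A)) * (- B / (2 * A)) + B * (- B / (2 * A)) + C)
      with ((4 * A * C - B * B) / (4 * A)) in P by (field; lra).
    apply Rmult_le_compat_r with (r := 4 * A) in P; [|lra].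
    unfold Rdiv in P. rewrite Rmult_0_l, Rmult_assoc, Rinv_l, Rmult_1_r in P; lra.
Qed.

Lemma Rsum_Cauchy_Schwarz n b w :
  Rsum_lt n (fun k => b k * w k) * Rsum_lt n (fun k => b k * w k)
  <= Rsum_lt n (fun k => b k * b k) * Rsum_lt n (fun k => w k * w k).
Proof.
  enough (2 * Rsum_lt n (fun k => b k * w k) * (2 * Rsum_lt n (fun k => b k * w k))
          <= 4 * Rsum_lt n (fun k => b k * b k) * Rsum_lt n (fun k => w k * w k)) by lra.
  apply quadratic_ge0_discr.
  - apply Rsum_ge0; intros k _; apply Rle_0_sqr.
  - intro t.
    replace (Rsum_lt n (fun k => b k * b k) * t * t + 2 * Rsum_lt n (fun k => b k * w k) * t
             + Rsum_lt n (fun k => w k * w k))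
      with (Rsum_lt n (fun k => (t * b k + w k) * (t * b k + w k))).
    + apply Rsum_ge0; intros k _; apply Rle_0_sqr.
    + rewrite (Rsum_ext n _ (fun k => (t * t * (b k * b k) + 2 * t * (b k * w k)) + w k * w k))
        by (intros; ring).
      rewrite !Rsum_add, !Rsum_scal. ring.
Qed.

Lemma growing_bounded_cauchy T B : Un_growing T -> (forall n, T n <= B) ->
  forall eps, eps > 0 -> exists N, forall M, (N <= M)%nat -> T M - T N < eps.
Proof.
  intros HT Bd eps Heps.
  destruct (growing_cv T HT) as [l Hl].
  { exists B. intros x [n ->]. apply Bd. }
  destruct (Hl eps Heps) as [N HN]. exists N. intros M _.
  specialize (HN N (le_n N)). unfold Rdist in HN. apply Rabs_def2 in HN.
  pose proof (growing_ineq T l HT Hl M). lra.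
Qed.

Lemma Rsum_bounded_cv0 f B : (forall k, 0 <= f k) -> (forall m, Rsum_lt m f <= B) ->
  Un_cv f 0.
Proof.
  intros P Bd eps He.
  destruct (growing_bounded_cauchy _ B (Rsum_growing f P) Bd eps He) as [N HN].
  exists N. intros n Hn. specialize (HN (S n) ltac:(lia)).
  pose proof (tech9 _ (Rsum_growing f P) N n Hn). simpl in HN.
  unfold Rdist. rewrite Rminus_0_r, Rabs_pos_eq by apply P. lra.
Qed.

Lemma Rsum_bounded_of_not_cv_infty g : (forall k, 0 <= g k) ->
  ~ cv_infty (fun n => sum_f_R0 g n) -> exists B, forall m, Rsum_lt m g <= B.
Proof.
  intros P NC. apply not_all_ex_not in NC as [B HB]. exists B. intro m.
  apply Rnot_lt_le. intro Hm. apply HB. exists m. intros n Hn.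
  assert (E : sum_f_R0 g n = Rsum_lt (S n) g).
  { clear. induction n as [|n IH]; simpl in *; [ring|]. rewrite IH. ring. }
  rewrite E. pose proof (tech9 _ (Rsum_growing g P) m (S n) ltac:(lia)). lra.
Qed.

Lemma interior_Rs_increase s A lam alpha :
  interior_Rs s A lam -> (exists j, (j < s)%nat /\ alpha j <> 0) ->
  exists mu, A mu /\ Rsum_lt s (fun j => alpha j * lam j) < Rsum_lt s (fun j => alpha j * mu j).
Proof.
  intros [eps [Heps HA]] [j0 [Hj0 Aj0]].
  set (d := if Rlt_dec 0 (alpha j0) then eps / 2 else - (eps / 2)).
  assert (Hd : Rabs d < eps /\ 0 < alpha j0 * d).
  { unfold d. destruct (Rlt_dec 0 (alpha j0)).
    - rewrite Rabs_pos_eq by lra. split; [lra|]. apply Rmult_lt_0_compat; lra.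
    - rewrite Rabs_left by lra. split; [lra|]. nra. }
  destruct Hd as [Hd_abs Hd_pos].
  exists (fun j => if Nat.eqb j j0 then lam j + d else lam j). split.
  - apply HA. intros j _. destruct (Nat.eqb j j0).
    + replace (lam j + d - lam j) with d by ring. exact Hd_abs.
    + rewrite Rminus_diag, Rabs_R0. lra.
  - rewrite (Rsum_update s (fun j => alpha j * lam j)
      (fun j => alpha j * (if Nat.eqb j j0 then lam j + d else lam j)) j0 (alpha j0 * d));
      [lra|auto|..].
    + intros j Hj. now rewrite (proj2 (Nat.eqb_neq j j0) Hj).
    + rewrite Nat.eqb_refl. ring.
Qed.

Definition Cnorm2 (z : Defs.C) : R := Cre z * Cre z + Cim z * Cim z.

Lemma Cnorm2_ge0 z : 0 <= Cnorm2 z.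
Proof. unfold Cnorm2; nra. Qed.

Lemma Re_Cmul_conj z : Cre (Cmul (Cconj z) z) = Cnorm2 z.
Proof. destruct z; unfold Cmul, Cconj, Cnorm2, Cre, Cim; simpl; ring. Qed.

Lemma Cnorm2_small_eq0 z : (forall eps, eps > 0 -> Cnorm2 z < eps) -> z = C0.
Proof.
  intro A. assert (Cnorm2 z <= 0).
  { apply Rnot_gt_le. intro G. specialize (A _ G). lra. }
  destruct z as [p q]. unfold Cnorm2, C0, Cre, Cim in *; simpl in *. f_equal; nra.
Qed.

Definition Csum (n : nat) (g : nat -> Defs.C) : Defs.C :=
  (Rsum_lt n (fun k => Cre (g k)), Rsum_lt n (fun k => Cim (g k))).

Lemma Re_Csum n g : Cre (Csum n g) = Rsum_lt n (fun k => Cre (g k)).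
Proof. reflexivity. Qed.

Arguments hadd_assoc {_}. Arguments hadd_comm {_}. Arguments hadd_zero {_}.
Arguments hadd_opp {_}. Arguments hscal_one {_}. Arguments hscal_assoc {_}.
Arguments hscal_addv {_}. Arguments hscal_adds {_}. Arguments hinner_add_l {_}.
Arguments hinner_scal_l {_}. Arguments hinner_conj {_}. Arguments hinner_pos {_}.
Arguments hinner_def {_}.

Definition hnorm2 {H : CHilbert} (x : H) : R := Cre (hinner x x).

Section HilbertAlgebra.
Context {H : CHilbert}.
Implicit Types x y z : H.

Lemma hadd0l x : hadd hzero x = x.
Proof. rewrite hadd_comm; apply hadd_zero. Qed.

Lemma hadd_idem_eq0 y : hadd y y = y -> y = hzero.
Proof.
  intro E. rewrite <- (hadd_opp y). rewrite <- E at 2.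
  now rewrite <- hadd_assoc, hadd_opp, hadd_zero.
Qed.

Lemma hscal0l x : hscal C0 x = hzero.
Proof.
  apply hadd_idem_eq0. rewrite <- hscal_adds. f_equal.
  unfold Cadd, C0; simpl; f_equal; ring.
Qed.

Lemma hscal0r c : hscal c (@hzero H) = hzero.
Proof. apply hadd_idem_eq0. now rewrite <- hscal_addv, hadd_zero. Qed.

Lemma hopp_unique x y : hadd x y = hzero -> y = hopp x.
Proof.
  intro E.
  rewrite <- (hadd_zero y), <- (hadd_opp x), hadd_assoc, (hadd_comm y x), E.
  apply hadd0l.
Qed.

Lemma hoppK x : hopp (hopp x) = x.
Proof. symmetry. apply hopp_unique. rewrite hadd_comm. apply hadd_opp. Qed.

Lemma hoppE x : hopp x = hscal (RtoC (-1)) x.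
Proof.
  symmetry; apply hopp_unique.
  rewrite <- (hscal_one x) at 1. rewrite <- hscal_adds.
  replace (Cadd Defs.C1 (RtoC (-1))) with C0
    by (unfold Cadd, C0, Defs.C1, RtoC; simpl; f_equal; ring).
  apply hscal0l.
Qed.

Lemma hadd_subK x y : hadd y (hadd x (hopp y)) = x.
Proof. now rewrite hadd_assoc, (hadd_comm y x), <- hadd_assoc, hadd_opp, hadd_zero. Qed.

Lemma hadd_sub_split x y z : hadd x (hopp z) = hadd (hadd x (hopp y)) (hadd y (hopp z)).
Proof.
  rewrite <- hadd_assoc. f_equal.
  now rewrite hadd_assoc, (hadd_comm (hopp y) y), hadd_opp, hadd0l.
Qed.

Lemma hscal_comm c d x : hscal c (hscal d x) = hscal d (hscal c x).
Proof.
  rewrite !hscal_assoc. f_equal.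
  destruct c, d; unfold Cmul; simpl; f_equal; ring.
Qed.

Lemma hadd_ACA x y z (w : H) : hadd (hadd x y) (hadd z w) = hadd (hadd x z) (hadd y w).
Proof. rewrite <- !hadd_assoc. f_equal. rewrite !hadd_assoc. f_equal. apply hadd_comm. Qed.

Lemma hinner0l y : hinner hzero y = C0.
Proof.
  rewrite <- (hscal0l y), hinner_scal_l.
  unfold Cmul, C0; simpl; f_equal; ring.
Qed.

Lemma hinner0r y : hinner y hzero = C0.
Proof. rewrite hinner_conj, hinner0l. unfold Cconj, C0; simpl; f_equal; ring. Qed.

Lemma hinner_add_r x y z : hinner x (hadd y z) = Cadd (hinner x y) (hinner x z).
Proof.
  rewrite hinner_conj, hinner_add_l, (hinner_conj x y), (hinner_conj x z).
  destruct (hinner y x), (hinner z x); unfold Cadd, Cconj; simpl; f_equal; ring.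
Qed.

Lemma hinner_scal_r a x y : hinner x (hscal a y) = Cmul (Cconj a) (hinner x y).
Proof.
  rewrite hinner_conj, hinner_scal_l, (hinner_conj x y).
  destruct a, (hinner y x); unfold Cmul, Cconj; simpl; f_equal; ring.
Qed.

Lemma hinner_opp_l x y : hinner (hopp x) y = Cmul (RtoC (-1)) (hinner x y).
Proof. now rewrite hoppE, hinner_scal_l. Qed.

Lemma hinner_opp_r x y : hinner x (hopp y) = Cmul (RtoC (-1)) (hinner x y).
Proof.
  rewrite hoppE, hinner_scal_r.
  destruct (hinner x y); unfold Cmul, Cconj, RtoC; simpl; f_equal; ring.
Qed.

Lemma Im_hinner_self x : Cim (hinner x x) = 0.
Proof.
  pose proof (hinner_conj x x) as E. destruct (hinner x x) as [p q].
  unfold Cconj in E; simpl in *. injection E; intros; lra.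
Qed.

Lemma Re_hinner_sym x y : Cre (hinner y x) = Cre (hinner x y).
Proof. now rewrite hinner_conj. Qed.

Lemma hinner_hsum_l n (f : nat -> H) z :
  hinner (hsum n f) z = Csum n (fun k => hinner (f k) z).
Proof.
  induction n as [|n IH]; simpl; [apply hinner0l|].
  now rewrite hinner_add_l, IH.
Qed.

Lemma hinner_hsum_r n (f : nat -> H) z :
  hinner z (hsum n f) = Csum n (fun k => hinner z (f k)).
Proof.
  induction n as [|n IH]; simpl; [apply hinner0r|].
  now rewrite hinner_add_r, IH.
Qed.

Lemma hsum_ext n (f g : nat -> H) :
  (forall k, (k < n)%nat -> f k = g k) -> hsum n f = hsum n g.
Proof. induction n as [|n IH]; simpl; intro E; [reflexivity|]. rewrite IH, E; auto. Qed.

Lemma hsum_add n (f g : nat -> H) :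
  hsum n (fun k => hadd (f k) (g k)) = hadd (hsum n f) (hsum n g).
Proof.
  induction n as [|n IH]; simpl; [symmetry; apply hadd_zero|].
  rewrite IH. apply hadd_ACA.
Qed.

Lemma hsum_scal n c (f : nat -> H) :
  hsum n (fun k => hscal c (f k)) = hscal c (hsum n f).
Proof.
  induction n as [|n IH]; simpl; [symmetry; apply hscal0r|].
  now rewrite IH, hscal_addv.
Qed.

Lemma hnorm2_ge0 x : 0 <= hnorm2 x.
Proof. apply hinner_pos. Qed.

Lemma hnorm2_eq0 x : hnorm2 x = 0 -> x = hzero.
Proof.
  intro Z. apply hinner_def. pose proof (Im_hinner_self x). unfold hnorm2 in Z.
  destruct (hinner x x); unfold C0, Cre, Cim in *; simpl in *; now subst.
Qed.

Lemma hnorm2_add x y : hnorm2 (hadd x y) = hnorm2 x + hnorm2 y + 2 * Cre (hinner x y).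
Proof.
  unfold hnorm2. rewrite hinner_add_l, !hinner_add_r.
  pose proof (Re_hinner_sym x y) as E. unfold Cadd, Cre in *; simpl. lra.
Qed.

Lemma hnorm2_sub x y : hnorm2 (hadd x (hopp y)) = hnorm2 x + hnorm2 y - 2 * Cre (hinner x y).
Proof.
  rewrite hnorm2_add. unfold hnorm2. rewrite hinner_opp_r, hinner_opp_l, hinner_opp_r.
  destruct (hinner x y), (hinner y y); unfold Cmul, RtoC, Cre; simpl. ring.
Qed.

Lemma hnorm2_subC x y : hnorm2 (hadd x (hopp y)) = hnorm2 (hadd y (hopp x)).
Proof. rewrite !hnorm2_sub, Re_hinner_sym. ring. Qed.

Lemma hnorm2_scal c x : hnorm2 (hscal c x) = Cnorm2 c * hnorm2 x.
Proof.
  unfold hnorm2. rewrite hinner_scal_l, hinner_scal_r.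
  pose proof (Im_hinner_self x).
  destruct c, (hinner x x); unfold Cmul, Cconj, Cnorm2, Cre, Cim in *; simpl in *.
  subst. ring.
Qed.

Lemma Re_hinner_le x y : Cre (hinner x y) <= (hnorm2 x + hnorm2 y) / 2.
Proof. pose proof (hnorm2_sub x y). pose proof (hnorm2_ge0 (hadd x (hopp y))). lra. Qed.

Lemma Re_hinner_ge x y : - ((hnorm2 x + hnorm2 y) / 2) <= Cre (hinner x y).
Proof. pose proof (hnorm2_add x y). pose proof (hnorm2_ge0 (hadd x y)). lra. Qed.

End HilbertAlgebra.

(** * Orthonormal expansions *)

Definition fourier_sum {H : CHilbert} (e : nat -> H) (m : nat) (y : H) : H :=
  hsum m (fun k => hscal (hinner y (e k)) (e k)).

Section Orthonormal.
Context {H : CHilbert} (e : nat -> H) (He : orthonormal_seq e).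

Lemma hinner_comb_basis (d : nat -> Defs.C) m l :
  hinner (hsum m (fun k => hscal (d k) (e k))) (e l) = if Nat.ltb l m then d l else C0.
Proof.
  assert (T : forall k, hinner (hscal (d k) (e k)) (e l) = if Nat.eqb k l then d k else C0).
  { intro k. rewrite hinner_scal_l, He.
    destruct (Nat.eqb k l), (d k); unfold Cmul, Defs.C1, C0; simpl; f_equal; ring. }
  assert (Delta : forall (p : Defs.C -> R), p C0 = 0 ->
    Rsum_lt m (fun k => p (hinner (hscal (d k) (e k)) (e l))) = if Nat.ltb l m then p (d l) else 0).
  { intros p p0. apply Rsum_delta.
    - intros k _ kl. rewrite T, (proj2 (Nat.eqb_neq k l) kl). exact p0.
    - now rewrite T, Nat.eqb_refl. }
  rewrite hinner_hsum_l. unfold Csum; cbv beta.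
  rewrite (Delta Cre) by reflexivity. rewrite (Delta Cim) by reflexivity.
  destruct (Nat.ltb l m); [now destruct (d l)|reflexivity].
Qed.

Lemma hinner_comb_r (g : nat -> Defs.C) n z :
  hinner z (hsum n (fun l => hscal (g l) (e l)))
  = Csum n (fun l => Cmul (Cconj (g l)) (hinner z (e l))).
Proof.
  rewrite hinner_hsum_r. unfold Csum.
  f_equal; apply Rsum_ext; intros; now rewrite hinner_scal_r.
Qed.

Lemma Re_hinner_comb_comb d g M L : (L <= M)%nat ->
  Cre (hinner (hsum M (fun k => hscal (d k) (e k))) (hsum L (fun l => hscal (g l) (e l))))
  = Rsum_lt L (fun l => Cre (Cmul (Cconj (g l)) (d l))).
Proof.
  intro LM. rewrite hinner_comb_r. apply Rsum_ext; intros l Hl.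
  now rewrite hinner_comb_basis, (proj2 (Nat.ltb_lt l M)) by lia.
Qed.

Lemma hnorm2_comb d M :
  hnorm2 (hsum M (fun k => hscal (d k) (e k))) = Rsum_lt M (fun k => Cnorm2 (d k)).
Proof.
  unfold hnorm2. rewrite Re_hinner_comb_comb by lia.
  apply Rsum_ext; intros; apply Re_Cmul_conj.
Qed.

Lemma hnorm2_sub_fourier m y :
  hnorm2 (hadd y (hopp (fourier_sum e m y)))
  = hnorm2 y - Rsum_lt m (fun k => Cnorm2 (hinner y (e k))).
Proof.
  rewrite hnorm2_sub. unfold fourier_sum. rewrite hnorm2_comb, hinner_comb_r.
  rewrite Re_Csum.
  rewrite (Rsum_ext m (fun k => Cre (Cmul (Cconj (hinner y (e k))) (hinner y (e k))))
             (fun k => Cnorm2 (hinner y (e k)))) by (intros; apply Re_Cmul_conj).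
  ring.
Qed.

Lemma bessel m y : Rsum_lt m (fun k => Cnorm2 (hinner y (e k))) <= hnorm2 y.
Proof.
  pose proof (hnorm2_sub_fourier m y).
  pose proof (hnorm2_ge0 (hadd y (hopp (fourier_sum e m y)))). lra.
Qed.

Lemma Cnorm2_hinner_le k y : Cnorm2 (hinner y (e k)) <= hnorm2 y.
Proof.
  pose proof (bessel (S k) y). simpl in *.
  pose proof (Rsum_ge0 k (fun k => Cnorm2 (hinner y (e k))) (fun k _ => Cnorm2_ge0 _)). lra.
Qed.

Lemma hinner_sub_fourier m y k : (k < m)%nat ->
  hinner (hadd y (hopp (fourier_sum e m y))) (e k) = C0.
Proof.
  intro Hk. rewrite hinner_add_l, hinner_opp_l. unfold fourier_sum.
  rewrite hinner_comb_basis, (proj2 (Nat.ltb_lt k m) Hk).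
  destruct (hinner y (e k)); unfold Cadd, Cmul, RtoC, C0; simpl; f_equal; ring.
Qed.

Lemma hnorm2_fourier_sub L M y : (L <= M)%nat ->
  hnorm2 (hadd (fourier_sum e M y) (hopp (fourier_sum e L y)))
  = Rsum_lt M (fun k => Cnorm2 (hinner y (e k))) - Rsum_lt L (fun k => Cnorm2 (hinner y (e k))).
Proof.
  intro LM. rewrite hnorm2_sub. unfold fourier_sum.
  rewrite !hnorm2_comb, Re_hinner_comb_comb by exact LM.
  rewrite (Rsum_ext L (fun k => Cre (Cmul (Cconj (hinner y (e k))) (hinner y (e k))))
             (fun k => Cnorm2 (hinner y (e k)))) by (intros; apply Re_Cmul_conj).
  ring.
Qed.

Lemma fourier_sum_cauchy y eps : eps > 0 -> exists N, forall m n, (m >= N)%nat -> (n >= N)%nat ->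
  sqrt (hnorm2 (hadd (fourier_sum e m y) (hopp (fourier_sum e n y)))) < eps.
Proof.
  intro Heps.
  set (T := fun M => Rsum_lt M (fun k => Cnorm2 (hinner y (e k)))).
  assert (TI : Un_growing T) by (apply Rsum_growing; intros; apply Cnorm2_ge0).
  destruct (growing_bounded_cauchy T _ TI (fun n => bessel n y) (eps * eps)) as [N HN]; [nra|].
  assert (Ordered : forall m n, (N <= n <= m)%nat ->
            sqrt (hnorm2 (hadd (fourier_sum e m y) (hopp (fourier_sum e n y)))) < eps).
  { intros m n [Hn Hm]. rewrite hnorm2_fourier_sub by exact Hm.
    rewrite <- (sqrt_Rsqr eps) by lra. apply sqrt_lt_1_alt. split.
    - pose proof (tech9 T TI _ _ Hm). unfold T in *. lra.
    - pose proof (HN m (Nat.le_trans _ _ _ Hn Hm)). pose proof (tech9 T TI _ _ Hn).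
      unfold T, Rsqr in *. lra. }
  exists N. intros m n Hm Hn.
  destruct (Nat.le_ge_cases n m).
  - apply Ordered; lia.
  - rewrite hnorm2_subC. apply Ordered; lia.
Qed.

Lemma Cnorm2_hinner_cv0 v : Un_cv (fun n => Cnorm2 (hinner (e n) v)) 0.
Proof.
  apply (Rsum_bounded_cv0 _ (hnorm2 v)); [intros; apply Cnorm2_ge0|].
  intro m. eapply Rle_trans; [|apply (bessel m v)]. apply Rsum_le. intros n _.
  rewrite (hinner_conj (e n)). unfold Cnorm2, Cconj, Cre, Cim; simpl. lra.
Qed.

End Orthonormal.

Lemma parseval {H : CHilbert} (e : nat -> H) y : orthonormal_basis e ->
  forall eps, eps > 0 -> exists N, forall M, (N <= M)%nat ->
  hnorm2 (hadd y (hopp (fourier_sum e M y))) < eps.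
Proof.
  intros [He Hmax].
  destruct (hcomplete H (fun M => fourier_sum e M y) (fourier_sum_cauchy e He y)) as [z Hz].
  assert (Close : forall eps, eps > 0 -> exists N, forall M, (N <= M)%nat ->
            hnorm2 (hadd (fourier_sum e M y) (hopp z)) < eps).
  { intros eps Heps. destruct (Hz (sqrt eps)) as [N HN]; [apply sqrt_lt_R0; lra|].
    exists N. intros M HM. apply sqrt_lt_0_alt. now apply HN. }
  assert (Yz : y = z).
  { assert (Orth : forall k, hinner (hadd y (hopp z)) (e k) = C0).
    { intro k. apply Cnorm2_small_eq0. intros eps Heps.
      destruct (Close eps Heps) as [N HN].
      set (M := Nat.max N (S k)).
      rewrite (hadd_sub_split y (fourier_sum e M y) z), hinner_add_l,
        hinner_sub_fourier by (auto; lia).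
      eapply Rle_lt_trans; [|apply (HN M); lia].
      eapply Rle_trans; [|apply (Cnorm2_hinner_le e He k)].
      destruct (hinner (hadd (fourier_sum e M y) (hopp z)) (e k)).
      unfold Cadd, C0, Cnorm2, Cre, Cim; simpl. lra. }
    pose proof (hopp_unique _ _ (Hmax _ Orth)) as E.
    now rewrite <- (hoppK z), E, hoppK. }
  subst z. intros eps Heps. destruct (Close eps Heps) as [N HN]. exists N. intros M HM.
  rewrite hnorm2_subC. now apply HN.
Qed.

(** * Positive forms *)

Definition qf {H : CHilbert} (T : H -> H) (x : H) : R := Cre (hinner (T x) x).

Section PositiveForm.
Context {H : CHilbert} (T : H -> H).
Hypothesis T_add : forall x y, T (hadd x y) = hadd (T x) (T y).
Hypothesis T_scal : forall c x, T (hscal c x) = hscal c (T x).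
Hypothesis T_pos : forall x, 0 <= qf T x.

Let polar x y := Cre (hinner (T x) y) + Cre (hinner (T y) x).

Lemma qf_add x y : qf T (hadd x y) = qf T x + qf T y + polar x y.
Proof.
  unfold qf, polar. rewrite T_add, hinner_add_l, !hinner_add_r.
  unfold Cadd, Cre; simpl. ring.
Qed.

Lemma qf_scal c x : qf T (hscal c x) = Cnorm2 c * qf T x.
Proof.
  unfold qf. rewrite T_scal, hinner_scal_l, hinner_scal_r.
  destruct c, (hinner (T x) x); unfold Cmul, Cconj, Cnorm2, Cre, Cim; simpl. ring.
Qed.

Lemma qf0 : qf T hzero = 0.
Proof. unfold qf. now rewrite hinner0r. Qed.

Lemma polar_le x y : polar x y <= 2 * sqrt (qf T x) * sqrt (qf T y).
Proof.
  assert (Dsq : polar x y * polar x y <= 4 * qf T x * qf T y).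
  { apply quadratic_ge0_discr; [apply T_pos|]. intro t.
    pose proof (T_pos (hadd (hscal (RtoC t) x) y)) as P.
    rewrite qf_add, qf_scal in P.
    replace (polar (hscal (RtoC t) x) y) with (t * polar x y) in P.
    - unfold Cnorm2, RtoC, Cre, Cim in P; simpl in P. nra.
    - unfold polar. rewrite T_scal, !hinner_scal_l, hinner_scal_r.
      destruct (hinner (T x) y), (hinner (T y) x).
      unfold Cmul, Cconj, RtoC, Cre; simpl. ring. }
  rewrite <- (sqrt_sqrt _ (T_pos x)), <- (sqrt_sqrt _ (T_pos y)) in Dsq.
  pose proof (sqrt_pos (qf T x)). pose proof (sqrt_pos (qf T y)).
  set (p := sqrt (qf T x)) in *. set (q := sqrt (qf T y)) in *.
  assert (0 <= p * q) by (apply Rmult_le_pos; assumption).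
  nra.
Qed.

Lemma qf_add_le x y : qf T (hadd x y) <= 2 * qf T x + 2 * qf T y.
Proof.
  rewrite qf_add. pose proof (polar_le x y).
  pose proof (sqrt_sqrt _ (T_pos x)). pose proof (sqrt_sqrt _ (T_pos y)).
  pose proof (Rle_0_sqr (sqrt (qf T x) - sqrt (qf T y))). unfold Rsqr in *. nra.
Qed.

Lemma sqrt_qf_add x y : sqrt (qf T (hadd x y)) <= sqrt (qf T x) + sqrt (qf T y).
Proof.
  rewrite <- (sqrt_Rsqr (sqrt (qf T x) + sqrt (qf T y)))
    by (pose proof (sqrt_pos (qf T x)); pose proof (sqrt_pos (qf T y)); lra).
  apply sqrt_le_1_alt. rewrite qf_add. pose proof (polar_le x y).
  pose proof (sqrt_sqrt _ (T_pos x)). pose proof (sqrt_sqrt _ (T_pos y)).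
  unfold Rsqr. nra.
Qed.

Lemma sqrt_qf_comb (e : nat -> H) d m :
  sqrt (qf T (hsum m (fun k => hscal (d k) (e k))))
  <= Rsum_lt m (fun k => sqrt (Cnorm2 (d k)) * sqrt (qf T (e k))).
Proof.
  induction m as [|m IH]; simpl.
  - rewrite qf0, sqrt_0. lra.
  - eapply Rle_trans; [apply sqrt_qf_add|].
    rewrite qf_scal, sqrt_mult by (apply Cnorm2_ge0 || apply T_pos). lra.
Qed.

End PositiveForm.

(** * Forms with summable diagonal *)

Section SummableDiagonal.
Context {H : CHilbert} (T : H -> H).
Hypothesis T_add : forall x y, T (hadd x y) = hadd (T x) (T y).
Hypothesis T_scal : forall c x, T (hscal c x) = hscal c (T x).
Hypothesis T_pos : forall x, 0 <= qf T x.
Variable K : R.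
Hypothesis K_ge0 : 0 <= K.
Hypothesis T_bound : forall x, qf T x <= K * hnorm2 x.
Variable u : nat -> H.
Hypothesis Hu : orthonormal_basis u.

Let diag k := qf T (u k).

Lemma qf_fourier_sum_le N y :
  qf T (fourier_sum u N y) <= K * Rsum_lt N (fun k => Cnorm2 (hinner y (u k))).
Proof.
  eapply Rle_trans; [apply T_bound|]. unfold fourier_sum.
  rewrite (hnorm2_comb u (proj1 Hu)). lra.
Qed.

(* Cauchy–Schwarz pairs the coefficients of [r] with the roots of the diagonal; as the
   coefficients of index < N vanish, only the diagonal tail from N on contributes. *)
Lemma qf_fourier_sum_tail_le N M r tau :
  (forall k, (k < N)%nat -> hinner r (u k) = C0) -> hnorm2 r <= 1 -> (N <= M)%nat ->
  Rsum_lt M diag - Rsum_lt N diag <= tau ->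
  qf T (fourier_sum u M r) <= tau.
Proof.
  intros Low Hr NM Tail.
  set (c k := sqrt (Cnorm2 (hinner r (u k)))).
  set (w k := if Nat.ltb k N then 0 else sqrt (diag k)).
  assert (Root : sqrt (qf T (fourier_sum u M r)) <= Rsum_lt M (fun k => c k * w k)).
  { eapply Rle_trans; [apply (sqrt_qf_comb T T_add T_scal T_pos)|].
    apply Req_le, Rsum_ext. intros k _. unfold c, w. destruct (Nat.ltb k N) eqn:E.
    - rewrite Low by (now apply Nat.ltb_lt). unfold Cnorm2, C0, Cre, Cim; simpl.
      rewrite Rmult_0_l, Rplus_0_l, sqrt_0. ring.
    - reflexivity. }
  assert (Coeffs : Rsum_lt M (fun k => c k * c k) <= 1).
  { eapply Rle_trans; [|exact Hr]. eapply Rle_trans; [|apply (bessel u (proj1 Hu) M r)].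
    apply Req_le, Rsum_ext. intros k _. apply sqrt_sqrt, Cnorm2_ge0. }
  assert (Weights : Rsum_lt M (fun k => w k * w k) <= tau).
  { rewrite <- (Rsum_drop_head N M diag NM) in Tail. eapply Rle_trans; [|exact Tail].
    apply Req_le, Rsum_ext. intros k _. unfold w. destruct (Nat.ltb k N); [ring|].
    apply sqrt_sqrt, T_pos. }
  pose proof (Rsum_Cauchy_Schwarz M c w) as CS.
  pose proof (Rsum_ge0 M (fun k => w k * w k) (fun k _ => Rle_0_sqr (w k))).
  pose proof (sqrt_pos (qf T (fourier_sum u M r))).
  pose proof (sqrt_sqrt _ (T_pos (fourier_sum u M r))). nra.
Qed.

Lemma qf_orth_head_le N r tau :
  (forall k, (k < N)%nat -> hinner r (u k) = C0) -> hnorm2 r <= 1 ->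
  (forall M, (N <= M)%nat -> Rsum_lt M diag - Rsum_lt N diag <= tau) ->
  qf T r <= 2 * tau.
Proof.
  intros Low Hr Tail. apply Rle_plus_epsilon. intros delta Hdelta.
  destruct (parseval u r Hu (delta / (2 * K + 1))) as [M0 HM0].
  { apply Rdiv_lt_0_compat; lra. }
  set (M := Nat.max N M0). set (t := fourier_sum u M r).
  assert (Head : qf T t <= tau)
    by (apply (qf_fourier_sum_tail_le N); [exact Low|exact Hr|lia|apply Tail; lia]).
  assert (Rest : qf T (hadd r (hopp t)) <= delta / 2).
  { eapply Rle_trans; [apply T_bound|].
    specialize (HM0 M ltac:(lia)). fold t in HM0.
    apply Rle_trans with (K * (delta / (2 * K + 1))).
    - apply Rmult_le_compat_l; lra.
    - apply Rmult_le_reg_r with (2 * K + 1); [lra|].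
      field_simplify; [nra|lra]. }
  rewrite <- (hadd_subK r t). pose proof (qf_add_le T T_add T_scal T_pos t (hadd r (hopp t))). lra.
Qed.

Hypothesis diag_summable : exists B, forall m, Rsum_lt m diag <= B.

Lemma qf_orthonormal_cv0 (x : nat -> H) : orthonormal_seq x -> Un_cv (fun n => qf T (x n)) 0.
Proof.
  intros Hx eps Heps.
  destruct diag_summable as [B HB].
  destruct (growing_bounded_cauchy _ B (Rsum_growing diag (fun k => T_pos (u k))) HB (eps / 8))
    as [N Tail]; [lra|].
  assert (Coeffs : Un_cv (fun n => Rsum_lt N (fun k => Cnorm2 (hinner (x n) (u k)))) 0).
  { rewrite <- (Rsum_const0 N). apply Rsum_cv. intros k _. now apply Cnorm2_hinner_cv0. }
  destruct (Coeffs (eps / (8 * (K + 1)))) as [n0 Hn0].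
  { apply Rdiv_lt_0_compat; lra. }
  exists n0. intros n Hn. specialize (Hn0 n Hn).
  unfold Rdist in *. rewrite Rminus_0_r in *.
  rewrite Rabs_pos_eq in Hn0 by (apply Rsum_ge0; intros; apply Cnorm2_ge0).
  rewrite Rabs_pos_eq by apply T_pos.
  set (y := x n) in *. set (p := fourier_sum u N y). set (r := hadd y (hopp p)).
  assert (Hy : hnorm2 y = 1).
  { unfold hnorm2, y. rewrite Hx, Nat.eqb_refl. reflexivity. }
  assert (Qp : qf T p <= eps / 8).
  { eapply Rle_trans; [apply qf_fourier_sum_le|].
    apply Rle_trans with (K * (eps / (8 * (K + 1)))); [apply Rmult_le_compat_l; lra|].
    apply Rmult_le_reg_r with (8 * (K + 1)); [lra|]. field_simplify; [nra|lra]. }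
  assert (Qr : qf T r <= 2 * (eps / 8)).
  { apply (qf_orth_head_le N).
    - intros k Hk. now apply (hinner_sub_fourier u (proj1 Hu)).
    - unfold r, p. rewrite (hnorm2_sub_fourier u (proj1 Hu)), Hy.
      pose proof (Rsum_ge0 N (fun k => Cnorm2 (hinner y (u k))) (fun k _ => Cnorm2_ge0 _)). lra.
    - intros M HM. left. now apply Tail. }
  rewrite <- (hadd_subK y p). pose proof (qf_add_le T T_add T_scal T_pos p r). fold r. lra.
Qed.

End SummableDiagonal.

Definition shifted_op {H : CHilbert} (V : H -> H) (a : R) (x : H) : H :=
  hadd (V x) (hscal (RtoC (- a)) x).

Section ShiftedOp.
Context {H : CHilbert} (V : H -> H) (a : R).
Hypothesis V_add : forall x y, V (hadd x y) = hadd (V x) (V y).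
Hypothesis V_scal : forall c x, V (hscal c x) = hscal c (V x).

Lemma shifted_op_add x y : shifted_op V a (hadd x y) = hadd (shifted_op V a x) (shifted_op V a y).
Proof. unfold shifted_op. now rewrite V_add, hscal_addv, hadd_ACA. Qed.

Lemma shifted_op_scal c x : shifted_op V a (hscal c x) = hscal c (shifted_op V a x).
Proof. unfold shifted_op. now rewrite V_scal, hscal_addv, hscal_comm. Qed.

Lemma qf_shifted_op x : qf (shifted_op V a) x = Cre (hinner (V x) x) - a * hnorm2 x.
Proof.
  unfold qf, shifted_op, hnorm2. rewrite hinner_add_l, hinner_scal_l.
  unfold Cadd, Cmul, RtoC, Cre; simpl. ring.
Qed.

(* The infimum of the numerical range bounds the form on unit vectors; homogeneity extends it. *)
Lemma qf_shifted_op_glb_ge0 :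
  (forall x, Cim (hinner (V x) x) = 0) ->
  is_glb (fun t => numrange V (RtoC t)) a -> forall x, 0 <= qf (shifted_op V a) x.
Proof.
  intros Vreal [Lb _] x. rewrite qf_shifted_op.
  destruct (Req_dec (hnorm2 x) 0) as [Z|Z].
  - rewrite Z, (hnorm2_eq0 x Z), hinner0r. unfold C0, Cre; simpl. lra.
  - pose proof (hnorm2_ge0 x).
    set (r := sqrt (hnorm2 x)).
    assert (Rp : 0 < r) by (apply sqrt_lt_R0; lra).
    assert (rr : r * r = hnorm2 x) by (apply sqrt_sqrt; lra).
    set (y := hscal (RtoC (/ r)) x).
    assert (Ny : hnorm2 y = 1).
    { unfold y. rewrite hnorm2_scal. unfold Cnorm2, RtoC, Cre, Cim; simpl.
      rewrite <- rr. field. lra. }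
    assert (Vy : Cre (hinner (V y) y) = / r * / r * Cre (hinner (V x) x)).
    { unfold y. rewrite V_scal, hinner_scal_l, hinner_scal_r. pose proof (Vreal x).
      destruct (hinner (V x) x); unfold Cmul, Cconj, RtoC, Cre, Cim in *; simpl in *. subst. ring. }
    assert (Unit : a <= Cre (hinner (V y) y)).
    { apply Lb. exists y. split.
      - unfold hnorm. fold (hnorm2 y). rewrite Ny. apply sqrt_1.
      - pose proof (Vreal y). destruct (hinner (V y) y).
        unfold RtoC, Cre, Cim in *; simpl in *. now subst. }
    rewrite Vy in Unit. rewrite <- rr.
    apply Rmult_le_compat_r with (r := r * r) in Unit; [|nra].
    replace (/ r * / r * Cre (hinner (V x) x) * (r * r)) with (Cre (hinner (V x) x))
      in Unit by (field; lra).
    lra.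
Qed.

Lemma qf_shifted_op_le K : 0 <= K -> (forall x, Cre (hinner (V x) x) <= K * hnorm2 x) ->
  exists K', 0 <= K' /\ forall x, qf (shifted_op V a) x <= K' * hnorm2 x.
Proof.
  intros K_ge0 HK. exists (K + Rabs a). split; [pose proof (Rabs_pos a); lra|]. intro x.
  rewrite qf_shifted_op. specialize (HK x).
  pose proof (Rle_abs (- a)). rewrite Rabs_Ropp in *. pose proof (hnorm2_ge0 x). nra.
Qed.

End ShiftedOp.

Lemma Re_hinner_bounded_op {H : CHilbert} (B : H -> H) : is_bounded_op B ->
  exists K, 0 <= K /\ forall x, Rabs (Cre (hinner (B x) x)) <= K * hnorm2 x.
Proof.
  intros [_ [_ [M HM]]]. exists ((M * M + 1) / 2). split; [nra|]. intro x.
  assert (N : hnorm2 (B x) <= M * M * hnorm2 x).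
  { specialize (HM x). unfold hnorm in HM. fold (hnorm2 (B x)) (hnorm2 x) in HM.
    pose proof (sqrt_pos (hnorm2 (B x))). pose proof (sqrt_pos (hnorm2 x)).
    rewrite <- (sqrt_sqrt _ (hnorm2_ge0 (B x))), <- (sqrt_sqrt _ (hnorm2_ge0 x)). nra. }
  pose proof (Re_hinner_le (B x) x). pose proof (Re_hinner_ge (B x) x).
  pose proof (hnorm2_ge0 x). apply Rabs_le. nra.
Qed.

Lemma Im_hinner_selfadjoint {H : CHilbert} (B : H -> H) : is_selfadjoint B ->
  forall x, Cim (hinner (B x) x) = 0.
Proof.
  intros [_ Sym] x. pose proof (Sym x x) as E. rewrite (hinner_conj (B x) x) in E.
  destruct (hinner (B x) x). unfold Cconj in E; simpl in E. injection E. unfold Cim; simpl. lra.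
Qed.

Section LinComb.
Context {H : CHilbert} (s : nat) (S : nat -> H -> H).
Hypothesis HS : forall j, (j < s)%nat -> is_selfadjoint (S j).
Variables (alpha0 : R) (alpha : nat -> R).

Lemma lincomb_op_add x y : lincomb_op s alpha0 alpha S (hadd x y)
  = hadd (lincomb_op s alpha0 alpha S x) (lincomb_op s alpha0 alpha S y).
Proof.
  unfold lincomb_op. rewrite hscal_addv, <- hadd_ACA, <- hsum_add. f_equal.
  apply hsum_ext. intros j Hj. destruct (HS j Hj) as [[S_add _] _].
  now rewrite S_add, hscal_addv.
Qed.

Lemma lincomb_op_scal c x :
  lincomb_op s alpha0 alpha S (hscal c x) = hscal c (lincomb_op s alpha0 alpha S x).
Proof.
  unfold lincomb_op. rewrite hscal_addv, hscal_comm, <- hsum_scal. f_equal.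
  apply hsum_ext. intros j Hj. destruct (HS j Hj) as [[_ [S_scal _]] _].
  now rewrite S_scal, hscal_comm.
Qed.

Lemma hinner_lincomb_op_l x y : hinner (lincomb_op s alpha0 alpha S x) y
  = Cadd (Cmul (RtoC alpha0) (hinner x y))
         (Csum s (fun j => Cmul (RtoC (alpha j)) (hinner (S j x) y))).
Proof.
  unfold lincomb_op. rewrite hinner_add_l, hinner_scal_l, hinner_hsum_l. f_equal.
  unfold Csum. f_equal; apply Rsum_ext; intros; now rewrite hinner_scal_l.
Qed.

Lemma Im_hinner_lincomb_op x : Cim (hinner (lincomb_op s alpha0 alpha S x) x) = 0.
Proof.
  rewrite hinner_lincomb_op_l. unfold Cadd, Csum, Cmul, RtoC, Cim; simpl.
  rewrite (Rsum_ext s _ (fun _ => 0)), Rsum_const0.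
  - pose proof (Im_hinner_self x) as E. unfold Cim in E. rewrite E. ring.
  - intros j Hj. pose proof (Im_hinner_selfadjoint (S j) (HS j Hj) x) as E.
    unfold Cim in E. rewrite E. ring.
Qed.

Lemma qf_shifted_lincomb_unit a x : hnorm2 x = 1 ->
  qf (shifted_op (lincomb_op s alpha0 alpha S) a) x
  = alpha0 - a + Rsum_lt s (fun j => alpha j * Cre (hinner (S j x) x)).
Proof.
  intro Hx. rewrite qf_shifted_op, hinner_lincomb_op_l, Hx.
  unfold hnorm2 in Hx. unfold Cadd, Csum, Cmul, RtoC, Cre in *; simpl in *. rewrite Hx.
  rewrite (Rsum_ext s _ (fun j => alpha j * fst (hinner (S j x) x))) by (intros; ring).
  ring.
Qed.

Lemma qf_lincomb_op_le : exists K, 0 <= K /\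
  forall x, Cre (hinner (lincomb_op s alpha0 alpha S x) x) <= K * hnorm2 x.
Proof.
  assert (Terms : forall n, (n <= s)%nat -> exists K, 0 <= K /\
            forall x, Rsum_lt n (fun j => alpha j * Cre (hinner (S j x) x)) <= K * hnorm2 x).
  { induction n as [|n IH]; intro Hn.
    - exists 0. split; [lra|]. intro x; simpl. pose proof (hnorm2_ge0 x). lra.
    - destruct IH as [K1 [K1_ge0 HK1]]; [lia|].
      destruct (Re_hinner_bounded_op (S n) (proj1 (HS n ltac:(lia)))) as [K2 [K2_ge0 HK2]].
      exists (K1 + Rabs (alpha n) * K2). split; [pose proof (Rabs_pos (alpha n)); nra|].
      intro x; simpl. specialize (HK1 x). specialize (HK2 x).
      pose proof (Rle_abs (alpha n * Cre (hinner (S n x) x))). rewrite Rabs_mult in *.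
      pose proof (Rabs_pos (alpha n)). pose proof (hnorm2_ge0 x). nra. }
  destruct (Terms s (le_n s)) as [K [K_ge0 HK]].
  exists (Rabs alpha0 + K). split; [pose proof (Rabs_pos alpha0); lra|]. intro x.
  rewrite hinner_lincomb_op_l. specialize (HK x). pose proof (hnorm2_ge0 x).
  pose proof (Rle_abs alpha0). unfold hnorm2 in *.
  unfold Cadd, Csum, Cmul, RtoC, Cre in *; simpl in *.
  rewrite (Rsum_ext s _ (fun j => alpha j * fst (hinner (S j x) x))) by (intros; ring).
  nra.
Qed.

Lemma ess_numrange_qf_cv a mu : ess_numrange s S mu ->
  exists x, orthonormal_seq x /\
    Un_cv (fun n => qf (shifted_op (lincomb_op s alpha0 alpha S) a) (x n))
          (alpha0 - a + Rsum_lt s (fun j => alpha j * mu j)).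
Proof.
  intros [x [Hx Hcv]]. exists x. split; [exact Hx|].
  assert (Sum : Un_cv (fun n => alpha0 - a
                         + Rsum_lt s (fun j => alpha j * Cre (hinner (S j (x n)) (x n))))
                      (alpha0 - a + Rsum_lt s (fun j => alpha j * mu j))).
  { apply CV_plus; [apply Un_cv_const|].
    apply (Rsum_cv s (fun n j => alpha j * Cre (hinner (S j (x n)) (x n)))).
    intros j Hj. apply CV_mult; [apply Un_cv_const|exact (proj1 (Hcv j Hj))]. }
  intros eps Heps. destruct (Sum eps Heps) as [N HN]. exists N. intros n Hn.
  rewrite qf_shifted_lincomb_unit; [now apply HN|].
  unfold hnorm2. now rewrite Hx, Nat.eqb_refl.
Qed.

End LinComb.

Theorem corollary4p7 (H : CHilbert) (s : nat) (S : nat -> H -> H)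
  (HS : forall j, (j < s)%nat -> is_selfadjoint (S j))
  (lam : nat -> nat -> R)
  (Hint : forall k, interior_Rs s (ess_numrange s S) (lam k))
  (HD : diag_seqs s S lam)
  (alpha0 : R) (alpha : nat -> R)
  (Halpha : exists j, (j < s)%nat /\ alpha j <> 0)
  (a : R)
  (Ha : is_glb (fun t => numrange (lincomb_op s alpha0 alpha S) (RtoC t)) a) :
  cv_infty (fun n => sum_f_R0
    (fun k => alpha0 - a + Rsum_lt s (fun j => alpha j * lam k j)) n).
Proof.
  destruct HD as [u [Hu Hdiag]].
  set (V := lincomb_op s alpha0 alpha S). set (T := shifted_op V a).
  pose proof (lincomb_op_add s S HS alpha0 alpha) as V_add.
  pose proof (lincomb_op_scal s S HS alpha0 alpha) as V_scal.
  pose proof (qf_shifted_op_glb_ge0 V a V_scal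
                (Im_hinner_lincomb_op s S HS alpha0 alpha) Ha) as T_pos.
  destruct (qf_lincomb_op_le s S HS alpha0 alpha) as [KV [KV_ge0 V_bound]].
  destruct (qf_shifted_op_le V a KV KV_ge0 V_bound) as [K [K_ge0 T_bound]].
  assert (Diag : forall k, alpha0 - a + Rsum_lt s (fun j => alpha j * lam k j) = qf T (u k)).
  { intro k. unfold T, V.
    rewrite qf_shifted_lincomb_unit by (unfold hnorm2; now rewrite (proj1 Hu), Nat.eqb_refl).
    f_equal. apply Rsum_ext. intros j Hj. now rewrite <- Hdiag. }
  destruct (interior_Rs_increase s _ (lam 0%nat) alpha (Hint 0%nat) Halpha) as [mu [Hmu Hlt]].
  destruct (ess_numrange_qf_cv s S alpha0 alpha a mu Hmu) as [x [Hx Hcv]].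
  apply NNPP. intro Bounded.
  apply Rsum_bounded_of_not_cv_infty in Bounded; [|intro k; rewrite Diag; apply T_pos].
  assert (Summable : exists B, forall m, Rsum_lt m (fun k => qf T (u k)) <= B).
  { destruct Bounded as [B HB]. exists B. intro m.
    rewrite <- (Rsum_ext m _ _ (fun k _ => Diag k)). apply HB. }
  pose proof (qf_orthonormal_cv0 T (shifted_op_add V a V_add) (shifted_op_scal V a V_scal)
                T_pos K K_ge0 T_bound u Hu Summable x Hx) as Hcv0.
  pose proof (UL_sequence _ _ _ Hcv Hcv0) as Limit0.
  pose proof (T_pos (u 0%nat)) as Diag0. rewrite <- Diag in Diag0.
  lra.
Qed.
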